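(* Suppose a bijective real-linear map $T\colon M_2(\mathbb F)\to M_2(\mathbb F)$ satisfies $\|T(A)T(B)\|=\|T(A)\|\,\|T(B)\|$ whenever $\|AB\|=\|A\|\,\|B\|$. Then $T(\mathbb F I)=\mathbb F I$.
   Context: $\mathbb F$ is $\mathbb C$ or $\mathbb R$ and $\|\cdot\|$ is the spectral norm on $M_2(\mathbb F)$. *)

From HB Require Import structures.
From mathcomp Require Import all_boot all_order all_algebra.
From mathcomp Require Import all_classical all_reals.
From mathcomp Require Import complex.
Set Implicit Arguments. Unset Strict Implicit. Unset Printing Implicit Defensive.
Import Order.TTheory GRing.Theory Num.Theory.
Local Open Scope ring_scope.
Local Open Scope classical_set_scope.

(* Euclidean norm of a column vector in F^2, given the modulus abs : F -> R
   (abs = absolute value for F = R, abs = complex modulus for F = C). *)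
Definition vnorm (R : realType) (F : nzRingType) (abs : F -> R)
  (x : 'cV[F]_2) : R :=
  Num.sqrt (\sum_(i < 2) abs (x i ord0) ^+ 2).

Definition specnorm (R : realType) (F : nzRingType) (abs : F -> R)
  (A : 'M[F]_2) : R :=
  sup [set vnorm abs (A *m x) | x in [set x : 'cV[F]_2 | vnorm abs x = 1]].

Definition real_linear (R : realType) (F : nzRingType) (emb : R -> F)
  (T : 'M[F]_2 -> 'M[F]_2) : Prop :=
  (forall A B, T (A + B) = T A + T B) /\
  (forall (r : R) A, T (emb r *: A) = emb r *: T A).

Definition scalar_mxs (F : nzRingType) : set 'M[F]_2 :=
  [set a%:M | a in [set: F]].

Definition thm11_for (R : realType) (F : nzRingType) (abs : F -> R)
  (emb : R -> F) : Prop :=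
  forall T : 'M[F]_2 -> 'M[F]_2,
    bijective T -> real_linear emb T ->
    (forall A B : 'M[F]_2,
       specnorm abs (A *m B) = specnorm abs A * specnorm abs B ->
       specnorm abs (T A *m T B) = specnorm abs (T A) * specnorm abs (T B)) ->
    T @` @scalar_mxs F = @scalar_mxs F.

From HB Require Import structures.
From mathcomp Require Import all_boot all_order all_algebra.
From mathcomp Require Import all_classical all_reals.
From mathcomp Require Import complex.
Import Order.TTheory GRing.Theory Num.Theory.
From mathcomp Require Import ring lra.
Set Implicit Arguments. Unset Strict Implicit. Unset Printing Implicit Defensive.
Local Open Scope ring_scope.

(* For 2x2 matrices, the spectral norm satisfies ||X^2|| = ||X||^2 exactly
   when X is normal, so T maps normal matrices to normal matrices.  A normal
   matrix plus a scalar matrix is normal; hence for Z = T(cI) and any normal X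
   the matrices T X, Z and T X + Z = T(X + cI) are all normal, which forces
   T X Z^* + Z (T X)^* = (T X)^* Z + Z^* T X.  Every matrix is the sum of a
   Hermitian and a skew-Hermitian one and T is additive and onto, so Z
   satisfies this relation against every matrix, which makes Z scalar.  Thus
   T(F I) is contained in F I, with equality because T induces an injective
   real-linear map of the finite-dimensional real space F into itself. *)

Lemma sum_ord2 (V : nmodType) (f : 'I_2 -> V) : \sum_(i < 2) f i = f 0 + f 1.
Proof. by rewrite big_ord_recl big_ord1; congr (_ + f _); exact: val_inj. Qed.

Lemma ord2P (i : 'I_2) : i = 0 \/ i = 1.
Proof. by case: i => -[|[|//]] ?; [left | right]; exact: val_inj. Qed.

Lemma sqrt_le_sqr (R : realType) (a b : R) : 0 <= b -> (Num.sqrt a <= b) = (a <= b ^+ 2).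
Proof. by move=> b0; rewrite -{1}(ger0_norm b0) -sqrtr_sqr ler_sqrt ?sqr_ge0. Qed.

Lemma linear_le_quadratic_eq0 (R : realType) (q C : R) :
  (forall t, (t * q) *+ 2 <= t ^+ 2 * C) -> q = 0.
Proof.
move=> qC; set d := `|C| + 1; have d_gt0 : 0 < d by rewrite ltr_pwDr.
have := qC (q / d); set t := q / d; have -> : q = t * d by rewrite mulfVK ?gt_eqF.
move=> ht; have : t ^+ 2 <= 0.
  have : 0 <= t ^+ 2 * (d *+ 2 - C - 2).
    by rewrite mulr_ge0 ?sqr_ge0 // /d; have := ler_norm C; have := normr_ge0 C; lra.
  nra.
by rewrite le_eqVlt ltNge sqr_ge0 orbF sqrf_eq0 => /eqP->; rewrite mul0r.
Qed.

Lemma cramer2_eq0 (F : fieldType) (a b x0 x1 y0 y1 : F) :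
  a * x0 + b * x1 = 0 -> a * y0 + b * y1 = 0 -> x0 * y1 - x1 * y0 != 0 ->
  a = 0 /\ b = 0.
Proof.
move=> ex ey d0; split; apply: (mulIf d0); rewrite mul0r.
  transitivity (y1 * (a * x0 + b * x1) - x1 * (a * y0 + b * y1)); first by ring.
  by rewrite ex ey !mulr0 subr0.
transitivity (x0 * (a * y0 + b * y1) - y0 * (a * x0 + b * x1)); first by ring.
by rewrite ex ey !mulr0 subr0.
Qed.

Lemma image_scalar_mxs (F : nzRingType) (T : 'M[F]_2 -> 'M[F]_2) (f : F -> F) :
  (forall c, T c%:M = (f c)%:M) -> (forall w, exists c, f c = w) ->
  (T @` @scalar_mxs F = @scalar_mxs F)%classic.
Proof.
move=> Tc f_surj; apply/seteqP; split=> Y.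
  by case=> X [c _ <-] <-; exists (f c); rewrite ?Tc.
case=> w _ <-; have [c <-] := f_surj w.
by exists c%:M; [exists c | rewrite Tc].
Qed.

(* [F] is [R] or [C], handled uniformly: [emb] is the embedding of the reals,
   [conj] the conjugation, [abs] the modulus and [re] the real part. *)
Section StarField.
Variables (R : realType) (F : fieldType).
Variables (emb : {rmorphism R -> F}) (conj : {rmorphism F -> F}).
Variables (abs re : F -> R).
Hypothesis conjK : involutive conj.
Hypothesis conj_emb : forall r, conj (emb r) = emb r.
Hypothesis abs_ge0 : forall x, 0 <= abs x.
Hypothesis emb_sqr_abs : forall x, emb (abs x ^+ 2) = x * conj x.
Hypothesis emb_re : forall z, emb (re z *+ 2) = z + conj z.
Hypothesis re_le_abs : forall z, re z <= abs z.

Let emb_inj : injective emb := fmorph_inj emb.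

Lemma conj_inj : injective conj. Proof. exact: can_inj conjK. Qed.

Lemma sqr_abs_inj x y : abs x ^+ 2 = abs y ^+ 2 -> abs x = abs y.
Proof. by move/eqP; rewrite eqrXn2 // => /eqP. Qed.

Lemma abs_eq0 x : (abs x == 0) = (x == 0).
Proof.
apply/eqP/eqP => [|->].
  move=> /(congr1 (fun t => emb (t ^+ 2))); rewrite emb_sqr_abs expr0n rmorph0.
  by move/eqP; rewrite mulf_eq0 fmorph_eq0 orbb => /eqP.
by apply/eqP; rewrite -sqrf_eq0 -(fmorph_eq0 emb) emb_sqr_abs mul0r.
Qed.

Lemma abs0 : abs 0 = 0. Proof. by apply/eqP; rewrite abs_eq0. Qed.

Lemma absM x y : abs (x * y) = abs x * abs y.
Proof.
apply/eqP; rewrite -(eqrXn2 (ltn0Sn 1)) ?mulr_ge0 //; apply/eqP/emb_inj.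
by rewrite emb_sqr_abs exprMn (rmorphM emb) !emb_sqr_abs rmorphM mulrACA.
Qed.

Lemma abs_emb r : abs (emb r) = `|r|.
Proof.
apply/eqP; rewrite -(eqrXn2 (ltn0Sn 1)) //; apply/eqP/emb_inj.
by rewrite emb_sqr_abs conj_emb real_normK ?num_real // rmorphXn expr2.
Qed.

Lemma abs1 : abs 1 = 1. Proof. by rewrite -(rmorph1 emb) abs_emb normr1. Qed.

Lemma abs_conj x : abs (conj x) = abs x.
Proof. by apply: sqr_abs_inj; apply: emb_inj; rewrite !emb_sqr_abs conjK mulrC. Qed.

Lemma absN x : abs (- x) = abs x.
Proof. by rewrite -mulN1r absM -(rmorph1 emb) -rmorphN abs_emb normrN normr1 mul1r. Qed.

Lemma re_emb r : re (emb r) = r.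
Proof.
have : re (emb r) *+ 2 = r *+ 2 by apply: emb_inj; rewrite emb_re conj_emb rmorphMn mulr2n.
lra.
Qed.

Lemma re0 : re 0 = 0.
Proof. by rewrite -(rmorph0 emb) re_emb. Qed.

Lemma reD z w : re (z + w) = re z + re w.
Proof.
have : re (z + w) *+ 2 = (re z + re w) *+ 2.
  by apply: emb_inj; rewrite emb_re mulrnDl (rmorphD emb) !emb_re rmorphD addrACA.
lra.
Qed.

Lemma reN z : re (- z) = - re z.
Proof. by apply/eqP; rewrite -addr_eq0 -reD addNr re0. Qed.

Lemma reZ r z : re (emb r * z) = r * re z.
Proof.
have : re (emb r * z) *+ 2 = (r * re z) *+ 2.
  by apply: emb_inj; rewrite emb_re -mulrnAr (rmorphM emb) emb_re rmorphM conj_emb -mulrDr.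
lra.
Qed.

Definition adj m n (M : 'M[F]_(m, n)) : 'M_(n, m) := (map_mx conj M)^T.

Lemma adjK m n : cancel (@adj m n) (@adj n m).
Proof. by move=> M; rewrite /adj map_trmx trmxK -map_mx_comp map_mx_id. Qed.

Lemma adjD m n (A B : 'M_(m, n)) : adj (A + B) = adj A + adj B.
Proof. by rewrite /adj map_mxD raddfD. Qed.

Lemma adjN m n (A : 'M_(m, n)) : adj (- A) = - adj A.
Proof. by rewrite /adj map_mxN raddfN. Qed.

Lemma adjZ m n a (A : 'M_(m, n)) : adj (a *: A) = conj a *: adj A.
Proof. by rewrite /adj map_mxZ linearZ. Qed.

Lemma adjM m n p (A : 'M_(m, n)) (B : 'M_(n, p)) : adj (A *m B) = adj B *m adj A.
Proof. by rewrite /adj map_mxM trmx_mul. Qed.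

Lemma adj_scalar n a : adj (a%:M : 'M_n) = (conj a)%:M.
Proof. by rewrite /adj map_scalar_mx tr_scalar_mx. Qed.

Section InnerProduct.
Variable n : nat.
Implicit Types (x y z : 'cV[F]_n) (M : 'M[F]_n).

Definition dot x y : F := (adj x *m y) 0 0.
Definition sqnorm x : R := \sum_i abs (x i 0) ^+ 2.

Lemma dotE x y : dot x y = \sum_i conj (x i 0) * y i 0.
Proof. by rewrite /dot mxE; apply: eq_bigr => i _; rewrite !mxE. Qed.

Lemma dotDl x y z : dot (x + y) z = dot x z + dot y z.
Proof. by rewrite /dot adjD mulmxDl mxE. Qed.

Lemma dotDr x y z : dot x (y + z) = dot x y + dot x z.
Proof. by rewrite /dot mulmxDr mxE. Qed.

Lemma dotZl a x y : dot (a *: x) y = conj a * dot x y.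
Proof. by rewrite /dot adjZ -scalemxAl mxE. Qed.

Lemma dotZr a x y : dot x (a *: y) = a * dot x y.
Proof. by rewrite /dot -scalemxAr mxE. Qed.


Lemma dotNr x y : dot x (- y) = - dot x y.
Proof. by rewrite -scaleN1r dotZr mulN1r. Qed.

Lemma conj_dot x y : conj (dot x y) = dot y x.
Proof.
rewrite !dotE rmorph_sum; apply: eq_bigr => i _.
by rewrite rmorphM conjK mulrC.
Qed.

Lemma dot_adj M x y : dot (M *m x) y = dot x (adj M *m y).
Proof. by rewrite /dot adjM mulmxA. Qed.

Lemma emb_sqnorm x : emb (sqnorm x) = dot x x.
Proof. by rewrite dotE rmorph_sum; apply: eq_bigr => i _; rewrite emb_sqr_abs mulrC. Qed.

Lemma re_dot_self x : re (dot x x) = sqnorm x.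
Proof. by rewrite -emb_sqnorm re_emb. Qed.

Lemma sqnorm_ge0 x : 0 <= sqnorm x.
Proof. by apply: sumr_ge0 => i _; rewrite sqr_ge0. Qed.

Lemma sqnorm_eq0 x : (sqnorm x == 0) = (x == 0).
Proof.
apply/eqP/eqP => [|->]; last by apply: big1 => i _; rewrite mxE abs0 expr0n.
move/eqP; rewrite psumr_eq0 => [/allP x0|i _]; last by rewrite sqr_ge0.
apply/matrixP => i j; rewrite !mxE ord1; apply/eqP.
by rewrite -abs_eq0 -sqrf_eq0; apply: x0; rewrite mem_index_enum.
Qed.

Lemma sqnorm0 : sqnorm (0 : 'cV[F]_n) = 0.
Proof. by apply/eqP; rewrite sqnorm_eq0. Qed.

Lemma sqnorm_gt0 x : (0 < sqnorm x) = (x != 0).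
Proof. by rewrite lt_def sqnorm_ge0 sqnorm_eq0 andbT. Qed.

Lemma sqnormD x y : sqnorm (x + y) = sqnorm x + sqnorm y + re (dot x y) *+ 2.
Proof.
apply: emb_inj; rewrite emb_sqnorm dotDl !dotDr (rmorphD emb) emb_re conj_dot.
by rewrite rmorphD !emb_sqnorm; ring.
Qed.

Lemma sqnormZ a x : sqnorm (a *: x) = abs a ^+ 2 * sqnorm x.
Proof. by rewrite mulr_sumr; apply: eq_bigr => i _; rewrite mxE absM exprMn. Qed.

Lemma sqnormN x : sqnorm (- x) = sqnorm x.
Proof. by rewrite -scaleN1r sqnormZ absN abs1 expr1n mul1r. Qed.

Lemma re_dot_le c x y : 0 <= c -> sqnorm y <= c ^+ 2 * sqnorm x ->
  re (dot x y) <= c * sqnorm x.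
Proof.
move=> c0 yx; have [c_gt0|c_le0] := ltrP 0 c.
  have := sqnorm_ge0 (emb c *: x - y).
  rewrite sqnormD sqnormN sqnormZ dotNr dotZl conj_emb reN reZ abs_emb real_normK ?num_real //.
  nra.
have c00 : c = 0 by apply/le_anti; rewrite c_le0.
move: yx; rewrite c00 expr0n !mul0r => y0.
have /eqP -> : y == 0 by rewrite -sqnorm_eq0 eq_le y0 sqnorm_ge0.
by rewrite /dot mulmx0 mxE re0.
Qed.

Definition normalmx M := adj M *m M = M *m adj M.

Lemma normalmx_sqnorm_adj M y : normalmx M -> sqnorm (adj M *m y) = sqnorm (M *m y).
Proof.
move=> nM; apply: emb_inj; rewrite !emb_sqnorm dot_adj adjK mulmxA -nM -mulmxA.
by rewrite -dot_adj.
Qed.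

Lemma normalmx_scalar c : normalmx (c%:M : 'M_n).
Proof. by rewrite /normalmx adj_scalar !mul_scalar_mx !scale_scalar_mx mulrC. Qed.

Lemma normalmx_herm M : adj M = M -> normalmx M.
Proof. by rewrite /normalmx => ->. Qed.

Lemma normalmx_skew M : adj M = - M -> normalmx M.
Proof. by rewrite /normalmx => ->; rewrite mulNmx mulmxN. Qed.

Lemma herm_skew_decomp M : exists H K, [/\ adj H = H, adj K = - K & M = H + K].
Proof.
have two0 : (2 : F) != 0 by rewrite -(rmorph_nat emb) fmorph_eq0 pnatr_eq0.
have conj_half : conj 2^-1 = 2^-1 by rewrite fmorphV rmorph_nat.
exists (2^-1 *: (M + adj M)), (2^-1 *: (M - adj M)); split.
- by rewrite adjZ adjD adjK conj_half addrC.
- by rewrite adjZ adjD adjN adjK conj_half -scalerN opprB addrC.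
- by rewrite -scalerDr addrACA subrr addr0 -mulr2n -scaler_nat scalerA mulVf ?scale1r.
Qed.

Lemma normalmx_addsc M c : normalmx M -> normalmx (M + c%:M).
Proof.
rewrite /normalmx adjD adj_scalar !mulmxDl !mulmxDr => ->.
rewrite !mul_scalar_mx !mul_mx_scalar !scale_scalar_mx mulrC !addrA.
by congr (_ + _); rewrite addrAC.
Qed.

(* The cross terms of the normality equation of [M + Z]. *)
Definition normal_cross M Z := M *m adj Z + Z *m adj M = adj M *m Z + adj Z *m M.

Lemma normal_cross_of_normal M Z :
  normalmx M -> normalmx Z -> normalmx (M + Z) -> normal_cross M Z.
Proof.
rewrite /normalmx /normal_cross adjD !mulmxDl !mulmxDr => -> ->.
by rewrite !addrA => /(addIr _); rewrite -!addrA => /(addrI _) ->.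
Qed.

Lemma normal_crossDl M1 M2 Z :
  normal_cross M1 Z -> normal_cross M2 Z -> normal_cross (M1 + M2) Z.
Proof.
by rewrite /normal_cross adjD !mulmxDl !mulmxDr => e1 e2; rewrite addrACA e1 e2 addrACA.
Qed.

End InnerProduct.



Lemma cV2P (x y : 'cV[F]_2) : x 0 0 = y 0 0 -> x 1 0 = y 1 0 -> x = y.
Proof. by move=> e0 e1; apply/matrixP => i j; rewrite ord1; case: (ord2P i) => ->. Qed.

Lemma sqnorm2E (x : 'cV[F]_2) : sqnorm x = abs (x 0 0) ^+ 2 + abs (x 1 0) ^+ 2.
Proof. exact: sum_ord2. Qed.

Lemma mulmx_colE (M : 'M[F]_2) (x : 'cV[F]_2) : M *m x = x 0 0 *: col 0 M + x 1 0 *: col 1 M.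
Proof. by apply: cV2P; rewrite !mxE sum_ord2 ![x _ 0 * _]mulrC. Qed.

Section PositiveForm2.
Variables (p r : R) (h : F).

(* The Hermitian form with matrix [[p, -h], [-h^*, r]]. *)
Definition form2 a b := p * abs a ^+ 2 + r * abs b ^+ 2 - re (conj a * b * h) *+ 2.

Hypothesis form2_ge0 : forall a b, 0 <= form2 a b.

Lemma form2_p_ge0 : 0 <= p.
Proof.
have := form2_ge0 1 0; rewrite /form2 abs1 abs0 mulr0 mul0r re0.
by rewrite expr1n expr0n /=; lra.
Qed.

Lemma form2_r_ge0 : 0 <= r.
Proof.
have := form2_ge0 0 1; rewrite /form2 abs1 abs0 rmorph0 !mul0r re0.
by rewrite expr1n expr0n /=; lra.
Qed.

Lemma form2_hE t : form2 h (emb t) = p * abs h ^+ 2 + r * t ^+ 2 - (t * abs h ^+ 2) *+ 2.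
Proof.
rewrite /form2 abs_emb real_normK ?num_real //; congr (_ - _ *+ 2).
by rewrite mulrC mulrA -emb_sqr_abs -rmorphM re_emb mulrC.
Qed.

Lemma form2_det_ge0 : abs h ^+ 2 <= p * r.
Proof.
have p0 := form2_p_ge0; have r0 := form2_r_ge0; have k0 := sqr_ge0 (abs h).
have [r_gt0|] := ltrP 0 r.
  have := form2_ge0 h (emb (abs h ^+ 2 / r)); rewrite form2_hE.
  set t := _ / r => ht; have tr : t * r = abs h ^+ 2 by rewrite mulfVK ?gt_eqF.
  have : 0 <= abs h ^+ 2 * (p * r - abs h ^+ 2) by nra.
  have [k_gt0|k_le0] := ltrP 0 (abs h ^+ 2).
    by rewrite pmulr_rge0 // subr_ge0.
  by move=> _; exact: le_trans k_le0 (mulr_ge0 _ _).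
rewrite le_eqVlt ltNge r0 orbF => /eqP r00.
rewrite r00 mulr0; have := form2_ge0 h (emb (p + 1)).
rewrite form2_hE r00 mul0r addr0; nra.
Qed.

Lemma form2_lb a b : (p * r - abs h ^+ 2) * (abs a ^+ 2 + abs b ^+ 2) <= (p + r) * form2 a b.
Proof.
have re_le : re (conj a * b * h) <= abs a * abs b * abs h.
  by rewrite (le_trans (re_le_abs _)) // !absM abs_conj.
have p0 := form2_p_ge0; have r0 := form2_r_ge0.
have := abs_ge0 a; have := abs_ge0 b; have := abs_ge0 h.
have : 0 <= (p * abs a - abs h * abs b) ^+ 2 + (r * abs b - abs h * abs a) ^+ 2.
  by rewrite addr_ge0 ?sqr_ge0.
rewrite /form2; nra.
Qed.

Lemma form2_degenerate : p * r = abs h ^+ 2 ->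
  exists a b, ((a != 0) || (b != 0)) /\ form2 a b = 0.
Proof.
move=> det0; have [p0|p0] := eqVneq p 0.
  exists 1, 0; rewrite oner_neq0; split=> //.
  by rewrite /form2 p0 abs0 mulr0 mul0r re0 expr0n /=; lra.
exists h, (emb p); rewrite fmorph_eq0 p0 orbT; split=> //.
by rewrite form2_hE -det0; ring.
Qed.

End PositiveForm2.

Section SpectralNorm.
Implicit Types (M : 'M[F]_2) (x : 'cV[F]_2).
Local Notation nrm := (specnorm abs).

Lemma vnormE x : vnorm abs x = Num.sqrt (sqnorm x).
Proof. by []. Qed.

Lemma sqnorm_e0 : sqnorm (delta_mx 0 0 : 'cV[F]_2) = 1.
Proof. by rewrite sqnorm2E !mxE /= abs1 abs0 expr1n expr0n addr0. Qed.

Lemma vnorm_unit x : vnorm abs x = 1 -> sqnorm x = 1.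
Proof.
by rewrite vnormE => /(congr1 (fun t => t ^+ 2)); rewrite sqr_sqrtr ?sqnorm_ge0 // expr1n.
Qed.

Lemma sqnormD_le x y : sqnorm (x + y) <= (sqnorm x + sqnorm y) *+ 2.
Proof.
have := sqnorm_ge0 (x - y); rewrite !sqnormD sqnormN dotNr reN mulNrn.
lra.
Qed.

Lemma has_sup_image_sphere M :
  has_sup [set vnorm abs (M *m x) | x in [set x | vnorm abs x = 1]].
Proof.
split.
  exists (vnorm abs (M *m delta_mx 0 0)), (delta_mx 0 0) => //=.
  by rewrite vnormE sqnorm_e0 sqrtr1.
exists (Num.sqrt ((sqnorm (col 0 M) + sqnorm (col 1 M)) *+ 2)).
move=> _ [x /= /vnorm_unit x1 <-]; rewrite vnormE ler_wsqrtr //.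
rewrite mulmx_colE; apply: le_trans (sqnormD_le _ _) _; rewrite !sqnormZ lerMn2r /=.
move: x1; rewrite sqnorm2E => x1.
have := sqnorm_ge0 (col 0 M); have := sqnorm_ge0 (col 1 M).
have := sqr_ge0 (abs (x 0 0)); have := sqr_ge0 (abs (x 1 0)); nra.
Qed.

Lemma specnorm_ub M x : vnorm abs x = 1 -> vnorm abs (M *m x) <= nrm M.
Proof. by move=> x1; apply: sup_upper_bound; [exact: has_sup_image_sphere | exists x]. Qed.

Lemma specnorm_ge0 M : 0 <= nrm M.
Proof.
apply: le_trans (sqrtr_ge0 _) (specnorm_ub M (x := delta_mx 0 0) _).
by rewrite vnormE sqnorm_e0 sqrtr1.
Qed.


Lemma sqnorm_mulmx_le M x : sqnorm (M *m x) <= nrm M ^+ 2 * sqnorm x.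
Proof.
have [->|x0] := eqVneq x 0.
  by rewrite mulmx0 sqnorm0 mulr0.
set s := Num.sqrt (sqnorm x).
have s_gt0 : 0 < s by rewrite sqrtr_gt0 sqnorm_gt0.
have s2 : s ^+ 2 = sqnorm x by rewrite sqr_sqrtr ?sqnorm_ge0.
have abs_s : abs (emb s^-1) ^+ 2 = (sqnorm x)^-1.
  by rewrite abs_emb ger0_norm ?invr_ge0 ?ltW // exprVn s2.
have /(specnorm_ub M) : vnorm abs (emb s^-1 *: x) = 1.
  by rewrite vnormE sqnormZ abs_s mulVf ?sqrtr1 // sqnorm_eq0.
rewrite vnormE -scalemxAr sqnormZ abs_s sqrt_le_sqr ?specnorm_ge0 //.
by rewrite mulrC ler_pdivrMr ?sqnorm_gt0.
Qed.

Lemma specnorm_le M c : 0 <= c ->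
  (forall x, sqnorm (M *m x) <= c ^+ 2 * sqnorm x) -> nrm M <= c.
Proof.
move=> c0 Mc; apply: ge_sup; first exact: (has_sup_image_sphere M).1.
move=> _ [x /= /vnorm_unit x1 <-]; rewrite vnormE sqrt_le_sqr //.
by have := Mc x; rewrite x1 mulr1.
Qed.

Lemma specnorm_mul A B : nrm (A *m B) <= nrm A * nrm B.
Proof.
apply: specnorm_le => [|x]; first by rewrite mulr_ge0 ?specnorm_ge0.
rewrite -mulmxA exprMn -mulrA; apply: le_trans (sqnorm_mulmx_le _ _) _.
by rewrite ler_wpM2l ?sqr_ge0 ?sqnorm_mulmx_le.
Qed.

Lemma specnorm_eq0 M : nrm M = 0 -> M = 0.
Proof.
move=> M0; apply/matrixP => i j.
have -> : M i j = col j M i 0 by rewrite mxE.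
have : sqnorm (M *m delta_mx j 0) <= 0.
  by have := sqnorm_mulmx_le M (delta_mx j 0); rewrite M0 expr0n mul0r.
by rewrite colE le_eqVlt ltNge sqnorm_ge0 orbF sqnorm_eq0 => /eqP ->; rewrite !mxE.
Qed.

Definition vec2 (a b : F) : 'cV[F]_2 := \col_i (if i == 0 then a else b).

Lemma vec2_0 a b : vec2 a b 0 0 = a. Proof. by rewrite mxE. Qed.
Lemma vec2_1 a b : vec2 a b 1 0 = b. Proof. by rewrite mxE. Qed.

Lemma vec2E x : x = vec2 (x 0 0) (x 1 0).
Proof. by apply: cV2P; rewrite ?vec2_0 ?vec2_1. Qed.

Lemma vec2_eq0 a b : (vec2 a b == 0) = (a == 0) && (b == 0).
Proof.
apply/eqP/andP => [ab0|[/eqP-> /eqP->]]; last by apply: cV2P; rewrite ?vec2_0 ?vec2_1 mxE.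
by split; apply/eqP; [rewrite -(vec2_0 a b) | rewrite -(vec2_1 a b)]; rewrite ab0 mxE.
Qed.

Lemma sqnorm_vec2 a b : sqnorm (vec2 a b) = abs a ^+ 2 + abs b ^+ 2.
Proof. by rewrite sqnorm2E vec2_0 vec2_1. Qed.

Lemma specnorm_deficit_vec2 N a b :
  nrm N ^+ 2 * sqnorm (vec2 a b) - sqnorm (N *m vec2 a b) =
  form2 (nrm N ^+ 2 - sqnorm (col 0 N)) (nrm N ^+ 2 - sqnorm (col 1 N))
        (dot (col 0 N) (col 1 N)) a b.
Proof.
rewrite /form2 mulmx_colE vec2_0 vec2_1 sqnormD !sqnormZ dotZl dotZr sqnorm_vec2 mulrA.
lra.
Qed.

Lemma specnorm_attained N : exists2 x, x != 0 & sqnorm (N *m x) = nrm N ^+ 2 * sqnorm x.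
Proof.
set s2 := nrm N ^+ 2.
pose p := s2 - sqnorm (col 0 N); pose r := s2 - sqnorm (col 1 N).
pose h := dot (col 0 N) (col 1 N).
have form_ge0 a b : 0 <= form2 p r h a b.
  by rewrite -specnorm_deficit_vec2 subr_ge0 sqnorm_mulmx_le.
have p0 := form2_p_ge0 form_ge0; have r0 := form2_r_ge0 form_ge0.
have [det_gt0|det_le0] := ltrP (abs h ^+ 2) (p * r); last first.
  have det0 : p * r = abs h ^+ 2 by apply/le_anti; rewrite det_le0 form2_det_ge0.
  have [a [b [ab0 /eqP]]] := form2_degenerate det0.
  rewrite -specnorm_deficit_vec2 subr_eq0 => /eqP deficit0.
  by exists (vec2 a b); rewrite // vec2_eq0 negb_and.
(* Otherwise the deficit form is definite, and ||N||^2 is not the least bound. *)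
have pr_gt0 : 0 < p + r by have := sqr_ge0 (abs h); nra.
set d := (p * r - abs h ^+ 2) / (p + r).
have d_gt0 : 0 < d by rewrite divr_gt0 // subr_gt0.
have Nd x : sqnorm (N *m x) <= (s2 - d) * sqnorm x.
  have := form2_lb form_ge0 (x 0 0) (x 1 0).
  rewrite -specnorm_deficit_vec2 -vec2E -sqnorm2E -ler_pdivrMl // mulrA.
  by rewrite [_^-1 * _]mulrC -/d -/s2 mulrBl; lra.
have s2d : 0 <= s2 - d.
  by have := Nd (delta_mx 0 0); rewrite sqnorm_e0 mulr1; apply: le_trans; exact: sqnorm_ge0.
have : nrm N <= Num.sqrt (s2 - d).
  by apply: specnorm_le => [|x]; rewrite ?sqrtr_ge0 // sqr_sqrtr.
have := sqr_sqrtr s2d; have := specnorm_ge0 N; have := sqrtr_ge0 (s2 - d).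
have : s2 = nrm N ^+ 2 by []; nra.
Qed.


Lemma adj_mul_maximizer M v : sqnorm (M *m v) = nrm M ^+ 2 * sqnorm v ->
  adj M *m (M *m v) = emb (nrm M ^+ 2) *: v.
Proof.
(* [v] maximizes [|M v|^2 - ||M||^2 |v|^2], so the derivative along
   [u = M^* M v - ||M||^2 v] vanishes: [2 t |u|^2 <= C t^2] for all real [t]. *)
move=> Mv; set s2 := nrm M ^+ 2; set u := adj M *m (M *m v) - emb s2 *: v.
suff /eqP : sqnorm u = 0 by rewrite sqnorm_eq0 subr_eq0 => /eqP.
apply: (@linear_le_quadratic_eq0 _ _ (s2 * sqnorm u - sqnorm (M *m u))) => t.
have MvMu : re (dot (M *m v) (M *m u)) = sqnorm u + s2 * re (dot v u).
  rewrite -[M in M *m u]adjK -dot_adj -[adj M *m _](subrK (emb s2 *: v)) -/u.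
  by rewrite dotDl dotZl conj_emb reD reZ re_dot_self.
clearbody u; have := sqnorm_mulmx_le M (v + emb t *: u).
rewrite mulmxDr -scalemxAr !sqnormD !sqnormZ !dotZr !reZ abs_emb real_normK ?num_real //.
rewrite Mv MvMu -/s2; nra.
Qed.

Lemma specnorm_sqr_normal X : normalmx X -> nrm (X *m X) = nrm X ^+ 2.
Proof.
move=> nX; apply/le_anti; rewrite {1}expr2 specnorm_mul /=.
set N := nrm (X *m X); have N0 : 0 <= N := specnorm_ge0 _.
rewrite -[N in _ <= N]sqr_sqrtr // ler_sqr ?nnegrE ?specnorm_ge0 ?sqrtr_ge0 //.
apply: specnorm_le => [|x]; rewrite ?sqrtr_ge0 // sqr_sqrtr //.
rewrite -re_dot_self dot_adj; apply: re_dot_le => //.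
by rewrite normalmx_sqnorm_adj // mulmxA sqnorm_mulmx_le.
Qed.

End SpectralNorm.

Section Geometry2.
Implicit Types (x y v : 'cV[F]_2) (K X : 'M[F]_2).

Definition det2 x y := x 0 0 * y 1 0 - x 1 0 * y 0 0.

Definition perp x := vec2 (- conj (x 1 0)) (conj (x 0 0)).

Lemma dot2E x y : dot x y = conj (x 0 0) * y 0 0 + conj (x 1 0) * y 1 0.
Proof. by rewrite dotE sum_ord2. Qed.

Lemma emb_sqnorm2 x : emb (sqnorm x) = conj (x 0 0) * x 0 0 + conj (x 1 0) * x 1 0.
Proof. by rewrite emb_sqnorm dot2E. Qed.

Lemma emb_sqnorm_neq0 x : x != 0 -> emb (sqnorm x) != 0.
Proof. by rewrite fmorph_eq0 sqnorm_eq0. Qed.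

Lemma dot_perp x : dot x (perp x) = 0.
Proof. by rewrite dot2E vec2_0 vec2_1; ring. Qed.

Lemma det2_perp x : det2 x (perp x) = emb (sqnorm x).
Proof. by rewrite /det2 vec2_0 vec2_1 emb_sqnorm2; ring. Qed.

Lemma colinear_det2 x y : x != 0 -> det2 x y = 0 ->
  y = (dot x y / emb (sqnorm x)) *: x.
Proof.
move=> x0 d0; have S0 := emb_sqnorm_neq0 x0.
apply: cV2P; rewrite mxE; apply: (mulIf S0); rewrite mulrAC divfK //.
  rewrite -[RHS]subr0 -(mulr0 (conj (x 1 0))) -d0 /det2 dot2E emb_sqnorm2; ring.
rewrite -[RHS]addr0 -(mulr0 (conj (x 0 0))) -d0 /det2 dot2E emb_sqnorm2; ring.
Qed.

Lemma span_perp x v : x != 0 -> dot x v = 0 -> v = (det2 x v / emb (sqnorm x)) *: perp x.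
Proof.
move=> x0 v0; have S0 := emb_sqnorm_neq0 x0.
apply: cV2P; rewrite mxE ?vec2_0 ?vec2_1; apply: (mulIf S0); rewrite mulrAC divfK //.
  rewrite -[RHS]addr0 -(mulr0 (x 0 0)) -v0 /det2 dot2E emb_sqnorm2; ring.
rewrite -[RHS]addr0 -(mulr0 (x 1 0)) -v0 /det2 dot2E emb_sqnorm2; ring.
Qed.


Lemma mx2_eq0 K x y : K *m x = 0 -> K *m y = 0 -> det2 x y != 0 -> K = 0.
Proof.
move=> Kx Ky d0; apply/matrixP => i j.
have row (z : 'cV[F]_2) : K *m z = 0 -> K i 0 * z 0 0 + K i 1 * z 1 0 = 0.
  by move=> Kz; have := congr1 (fun A : 'cV[F]_2 => A i 0) Kz; rewrite !mxE sum_ord2.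
have [Ki0 Ki1] := cramer2_eq0 (row _ Kx) (row _ Ky) d0.
by rewrite mxE; case: (ord2P j) => ->.
Qed.

Lemma normal_cross_scalar (Z : 'M[F]_2) : (forall M, normal_cross M Z) -> Z = (Z 0 0)%:M.
Proof.
move=> cross.
have entry w (i j k l : 'I_2) : let M : 'M[F]_2 := w *: delta_mx i j in
  (M *m adj Z + Z *m adj M) k l = (adj M *m Z + adj Z *m M) k l by move=> M; rewrite cross.
have twice_sqr_eq0 z : z * conj z + z * conj z = 0 -> z = 0.
  move/eqP; rewrite -emb_sqr_abs -rmorphD fmorph_eq0 -mulr2n mulrn_eq0 /=.
  by rewrite sqrf_eq0 abs_eq0 => /eqP.
have Z01 : Z 0 1 = 0.
  apply: twice_sqr_eq0; have := entry (Z 0 1) 0 1 0 0.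
  by rewrite /= !mxE !sum_ord2 !mxE /= !(mulr0, mulr1, rmorph0, mul0r, addr0, add0r).
have Z10 : Z 1 0 = 0.
  apply: twice_sqr_eq0; have := entry (Z 1 0) 1 0 1 1.
  by rewrite /= !mxE !sum_ord2 !mxE /= !(mulr0, mulr1, rmorph0, mul0r, addr0, add0r).
have Z11 : Z 1 1 = Z 0 0.
  apply: conj_inj; have := entry 1 0 1 0 1.
  by rewrite /= !mxE !sum_ord2 !mxE /= !(mulr0, mulr1, rmorph0, mul0r, mul1r, addr0, add0r).
by apply/matrixP => i j; rewrite mxE; case: (ord2P i) => ->; case: (ord2P j) => ->.
Qed.

End Geometry2.

Section NormalityCriterion.
Implicit Types (x : 'cV[F]_2) (X : 'M[F]_2).
Local Notation nrm := (specnorm abs).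

Lemma normalmx_of_adj_mul_scalar X a : a != 0 -> adj X *m X = a%:M -> normalmx X.
Proof.
move=> a0 AX; have : (a^-1 *: adj X) *m X = 1%:M.
  by rewrite -scalemxAl AX scale_scalar_mx mulVf.
move/mulmx1C; rewrite -scalemxAr => /(congr1 (fun M => a *: M)).
by rewrite scalerA divff // scale1r scale_scalar_mx mulr1 /normalmx AX => ->.
Qed.

Lemma normalmx_of_eigen X x lam : x != 0 ->
  X *m x = lam *: x -> adj X *m x = conj lam *: x -> normalmx X.
Proof.
move=> x0 Xx AXx; set z := perp x.
have perp_stable Y mu : adj Y *m x = mu *: x -> exists nu, Y *m z = nu *: z.
  move=> Yx; eexists; apply: span_perp => //.
  by rewrite -[Y in Y *m z]adjK -dot_adj Yx dotZl dot_perp mulr0.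
have [nu Xz] := perp_stable X _ AXx.
have [nu' AXz] : exists nu, adj X *m z = nu *: z by apply: (perp_stable _ lam); rewrite adjK.
apply/eqP; rewrite -subr_eq0; apply/eqP; apply: (@mx2_eq0 _ x z).
- by rewrite mulmxBl -!mulmxA Xx AXx -!scalemxAr AXx Xx !scalerA mulrC subrr.
- by rewrite mulmxBl -!mulmxA Xz AXz -!scalemxAr AXz Xz !scalerA mulrC subrr.
- by rewrite det2_perp emb_sqnorm_neq0.
Qed.

Lemma normalmx_of_specnorm_sqr X : nrm (X *m X) = nrm X ^+ 2 -> normalmx X.
Proof.
move=> XX; have [X0|] := eqVneq (nrm X) 0.
  by rewrite /normalmx (specnorm_eq0 X0) mulmx0 mul0mx.
move=> s0; set s2 := nrm X ^+ 2.
have s2_gt0 : 0 < s2 by rewrite exprn_gt0 // lt_def s0 specnorm_ge0.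
(* [x] attains ||X^2||, so [x] and [X x] attain ||X|| and are eigenvectors of
   [X^* X]; either they span [F^2], or [x] is an eigenvector of [X] and [X^*]. *)
have [x x0] := specnorm_attained (X *m X); rewrite XX -mulmxA -/s2.
set y := X *m x => XXx.
have y_max : sqnorm y = s2 * sqnorm x.
  apply/le_anti; rewrite sqnorm_mulmx_le -(ler_pM2l s2_gt0) mulrA -expr2 -XXx.
  exact: sqnorm_mulmx_le.
have Xy_max : sqnorm (X *m y) = s2 * sqnorm y by rewrite XXx y_max mulrA -expr2.
have AXXx := adj_mul_maximizer y_max; have AXXy := adj_mul_maximizer Xy_max.
have [d0|d0] := eqVneq (det2 x y) 0; last first.
  apply: (@normalmx_of_adj_mul_scalar _ (emb s2)); first by rewrite fmorph_eq0 gt_eqF.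
  apply/eqP; rewrite -subr_eq0; apply/eqP; apply: (mx2_eq0 _ _ d0).
    by rewrite mulmxBl mul_scalar_mx -mulmxA AXXx subrr.
  by rewrite mulmxBl mul_scalar_mx -mulmxA AXXy subrr.
pose lam := dot x y / emb (sqnorm x); have Xx : X *m x = lam *: x := colinear_det2 x0 d0.
have lam_conj : lam * conj lam = emb s2.
  rewrite -emb_sqr_abs; congr (emb _).
  apply: (@mulIf _ (sqnorm x)); first by rewrite sqnorm_eq0.
  by rewrite -sqnormZ -Xx.
have /andP[lam0 _] : (lam != 0) && (conj lam != 0).
  by rewrite -negb_or -mulf_eq0 lam_conj fmorph_eq0 gt_eqF.
apply: (normalmx_of_eigen x0 Xx); apply: (scalerI lam0).
by rewrite scalerA lam_conj -AXXx Xx scalemxAr.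
Qed.

End NormalityCriterion.

Section Preserver.
Local Notation nrm := (specnorm abs).
Variable T : 'M[F]_2 -> 'M[F]_2.
Hypothesis T_surj : forall W, exists A, T A = W.
Hypothesis T_add : forall A B, T (A + B) = T A + T B.
Hypothesis T_mult : forall A B, nrm (A *m B) = nrm A * nrm B ->
  nrm (T A *m T B) = nrm (T A) * nrm (T B).

Lemma preserver_normalmx X : normalmx X -> normalmx (T X).
Proof.
move=> nX; apply: normalmx_of_specnorm_sqr; rewrite expr2; apply: T_mult.
by rewrite -expr2; exact: specnorm_sqr_normal.
Qed.

Lemma preserver_scalar c : T c%:M = (T c%:M 0 0)%:M.
Proof.
set Z := T c%:M; apply: normal_cross_scalar => W.
have nZ : normalmx Z by apply/preserver_normalmx/normalmx_scalar.
have crossZ X : normalmx X -> normal_cross (T X) Z.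
  move=> nX; apply: normal_cross_of_normal nZ _; first exact: preserver_normalmx.
  by rewrite -T_add; apply/preserver_normalmx/normalmx_addsc.
have [Y <-] := T_surj W; have [H [K [hH hK ->]]] := herm_skew_decomp Y.
rewrite T_add; apply: normal_crossDl; apply: crossZ.
  exact: normalmx_herm hH.
exact: normalmx_skew hK.
Qed.

End Preserver.

Lemma thm11_for_star_field :
  (forall f : F -> F, {morph f : x y / x + y} -> (forall r x, f (emb r * x) = emb r * f x) ->
     injective f -> forall w, exists x, f x = w) ->
  thm11_for abs emb.
Proof.
move=> real_findim T [T' TK T'K] [T_add T_scale] T_mult.
have T_surj W : exists A, T A = W by exists (T' W).
pose f c := T c%:M 0 0.
have Tc c : T c%:M = (f c)%:M := preserver_scalar T_surj T_add T_mult c.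
apply: (image_scalar_mxs Tc); apply: real_findim.
- by move=> a b; rewrite /f raddfD T_add mxE.
- by move=> r a; rewrite /f -scale_scalar_mx T_scale mxE.
- move=> a b /(congr1 (@scalar_mx F 2)); rewrite -!Tc => /(can_inj TK).
  by move/(congr1 (fun M : 'M_2 => M 0 0)); rewrite !mxE.
Qed.

End StarField.

Lemma real_linear_surjR (R : realType) (f : R -> R) :
  (forall r x, f (r * x) = r * f x) -> injective f -> forall w, exists x, f x = w.
Proof.
move=> fZ f_inj w; have f0 : f 0 = 0 by have := fZ 0 0; rewrite !mul0r.
have f1 : f 1 != 0 by apply: contra_neq (oner_neq0 R) => f10; apply: f_inj; rewrite f10 f0.
by exists (w / f 1); rewrite -[w / f 1]mulr1 fZ divfK.
Qed.

Section ComplexInstance.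
Variable R : realType.
Local Open Scope complex_scope.

Lemma normc_ge0 (x : R[i]) : 0 <= Normc.normc x.
Proof. by case: x => a b; exact: sqrtr_ge0. Qed.

Lemma sqr_normcE (x : R[i]) : (Normc.normc x ^+ 2)%:C = x * x^*.
Proof.
by case: x => a b /=; simpc; rewrite sqr_sqrtr ?addr_ge0 ?sqr_ge0 //; congr (_ +i* _); ring.
Qed.

Lemma Re_mul2n (z : R[i]) : (complex.Re z *+ 2)%:C = z + z^*.
Proof. by case: z => a b /=; simpc; congr (_ +i* _); ring. Qed.

Lemma Re_le_normc (z : R[i]) : complex.Re z <= Normc.normc z.
Proof.
case: z => a b /=; apply: le_trans (ler_norm a) _.
by rewrite -sqrtr_sqr ler_sqrt ?addr_ge0 ?sqr_ge0 // lerDl sqr_ge0.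
Qed.

Lemma real_linear_surjC (f : R[i] -> R[i]) :
  {morph f : x y / x + y} -> (forall r x, f (r%:C * x) = r%:C * f x) -> injective f ->
  forall w, exists x, f x = w.
Proof.
move=> fD fZ f_inj; have f0 : f 0 = 0 by have := fZ 0 0; rewrite rmorph0 !mul0r.
have fE x y : f (x%:C + y%:C * 'i) = x%:C * f 1 + y%:C * f 'i.
  by rewrite fD fZ -{1}[x%:C]mulr1 fZ.
have fker x y : x%:C * f 1 + y%:C * f 'i = 0 -> x = 0 /\ y = 0.
  by rewrite -fE -f0 => /f_inj; simpc => -[].
have f1 : f 1 != 0 by apply: contra_neq (oner_neq0 R[i]) => f10; apply: f_inj; rewrite f10 f0.
move: (f 1) (f 'i) fE fker f1 => [a1 a2] [b1 b2] fE fker f1.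
have D0 : a1 * b2 - a2 * b1 != 0.
  apply: contra_neq f1 => D0.
  have [b2_0 a2_0] : b2 = 0 /\ - a2 = 0 by apply: fker; simpc; congr (_ +i* _); lra.
  have [b1_0 a1_0] : b1 = 0 /\ - a1 = 0.
    by apply: fker; simpc; rewrite b2_0 -[a2]opprK a2_0; congr (_ +i* _); lra.
  by rewrite -[a1]opprK -[a2]opprK a1_0 a2_0 oppr0.
move=> [w1 w2]; exists (((w1 * b2 - w2 * b1) / (a1 * b2 - a2 * b1))%:C +
  ((a1 * w2 - a2 * w1) / (a1 * b2 - a2 * b1))%:C * 'i).
by rewrite fE; simpc; congr (_ +i* _); field.
Qed.

End ComplexInstance.

Theorem mainTheorem11 (R : realType) :
  thm11_for (fun x : R => `|x|) (fun r : R => r) /\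
  thm11_for (@Normc.normc R) (real_complex R).
Proof.
split.
- apply: (@thm11_for_star_field R R idfun idfun _ idfun) => //.
  + by move=> x; rewrite real_normK ?num_real // expr2.
  + by move=> z; rewrite ler_norm.
  + by move=> f _ fZ; exact: real_linear_surjR.
- apply: (@thm11_for_star_field R R[i] (real_complex R) conjc _ (@complex.Re R)).
  + exact: conjcK.
  + exact: conjc_real.
  + exact: normc_ge0.
  + exact: sqr_normcE.
  + exact: Re_mul2n.
  + exact: Re_le_normc.
  + by move=> f fD fZ; exact: real_linear_surjC.
Qed.
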